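(* Let $\mathcal{P}\subset\mathbb{R}^d$ be a finite set of item vectors, $\bm{q}\in\mathbb{R}^d$, $k>1$ an integer, $\lambda\in[0,1]$, $\mu>0$, and assume $\langle\bm{x},\bm{y}\rangle\ge0$ for all $\bm{x},\bm{y}\in\mathcal{P}\cup\{\bm{q}\}$. Let $\mathcal{N}\subseteq\mathcal{P}$ be nonempty with center $\bm{c}=\frac{1}{|\mathcal{N}|}\sum_{\bm{p}\in\mathcal{N}}\bm{p}$ and radius $r=\max_{\bm{p}\in\mathcal{N}}\|\bm{p}-\bm{c}\|$. Then for every $\mathcal{S}\subseteq\mathcal{P}$, and for $\Delta_f$ equal to either $\Delta_{f_{avg}}$ or $\Delta_{f_{max}}$, $$\max_{\bm{p}\in\mathcal{N}}\Delta_f(\bm{p},\mathcal{S})\le\tfrac{\lambda}{k}\big(\langle\bm{q},\bm{c}\rangle+r\|\bm{q}\|\big).$$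
   Context: $\Delta_{f_{avg}}(\bm{p},\mathcal{S}) = \frac{\lambda}{k}\langle\bm{p},\bm{q}\rangle - \frac{2\mu(1-\lambda)}{k(k-1)}\sum_{\bm{p}'\in\mathcal{S}}\langle\bm{p},\bm{p}'\rangle$ and $\Delta_{f_{max}}(\bm{p},\mathcal{S}) = \frac{\lambda}{k}\langle\bm{p},\bm{q}\rangle - \mu(1-\lambda)\big(\max_{\bm{p}_x\ne\bm{p}_y\in\mathcal{S}\cup\{\bm{p}\}}\langle\bm{p}_x,\bm{p}_y\rangle - \max_{\bm{p}_x\ne\bm{p}_y\in\mathcal{S}}\langle\bm{p}_x,\bm{p}_y\rangle\big)$, where a maximum over an empty collection of pairs is taken to be $0$. These are the marginal gains of the diversity-aware objectives $f_{avg}(\mathcal{S}) = \frac{\lambda}{k}\sum_{\bm{p}\in\mathcal{S}}\langle\bm{p},\bm{q}\rangle - \frac{2\mu(1-\lambda)}{k(k-1)}\sum_{\{\bm{p},\bm{p}'\}\subseteq\mathcal{S}}\langle\bm{p},\bm{p}'\rangle$ and $f_{max}(\mathcal{S}) = \frac{\lambda}{k}\sum_{\bm{p}\in\mathcal{S}}\langle\bm{p},\bm{q}\rangle-\mu(1-\lambda)\max_{\bm{p}\ne\bm{p}'\in\mathcal{S}}\langle\bm{p},\bm{p}'\rangle$. The set $\mathcal{N}$ plays the role of a node of a ball tree (BC-Tree) storing its centroid and radius. *)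

From HB Require Import structures.
From mathcomp Require Import all_boot all_order all_algebra.
From mathcomp Require Import reals.
Set Implicit Arguments. Unset Strict Implicit. Unset Printing Implicit Defensive.
Import Order.TTheory GRing.Theory Num.Theory.
Local Open Scope ring_scope.

Section Defs.
Variables (R : realType) (d : nat).
Implicit Types (x y p q c : 'rV[R]_d) (S N : seq 'rV[R]_d).

Definition dotp x y : R := \sum_(i < d) x 0 i * y 0 i.

Definition vnorm x : R := Num.sqrt (dotp x x).

(* centroid c = (1/|N|) sum_{p in N} p  (N a duplicate-free seq) *)
Definition centroid N : 'rV[R]_d := (size N)%:R^-1 *: \sum_(p <- N) p.

(* radius r = max_{p in N} ||p - c||  (norms are >= 0, so 0 is a neutral start) *)
Definition radius N : R := \big[Num.max/0]_(p <- N) vnorm (p - centroid N).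

(* max over pairs of distinct elements x != y of S of <x,y>; 0 if no such pair.
   Used only with nonnegative inner products, where this is the true max. *)
Definition maxpair S : R :=
  \big[Num.max/0]_(x <- S) \big[Num.max/0]_(y <- S | y != x) dotp x y.

Definition addp p S : seq 'rV[R]_d := if p \in S then S else p :: S.

Definition delta_avg (lam mu : R) (k : nat) q p S : R :=
  lam / k%:R * dotp p q
  - (2 * mu * (1 - lam)) / (k%:R * (k%:R - 1)) * \sum_(p' <- S) dotp p p'.

Definition delta_max (lam mu : R) (k : nat) q p S : R :=
  lam / k%:R * dotp p q
  - mu * (1 - lam) * (maxpair (addp p S) - maxpair S).

(* max_{p in N} F p, for nonempty N *)
Definition seqmax (N : seq 'rV[R]_d) (F : 'rV[R]_d -> R) : R :=
  \big[Num.max/F (head 0 N)]_(p <- N) F p.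

End Defs.

(* Both diversity penalties are nonnegative: the inner products in the
   average penalty are nonnegative by hypothesis, and adding [p] to [S] can
   only increase the maximal pairwise similarity.  Hence each marginal gain is
   at most [lam / k * <p, q>].  Writing [p = c + (p - c)] and applying
   Cauchy-Schwarz with [||p - c|| <= r] bounds [<p, q>] by
   [<q, c> + r ||q||] for every [p] in [N]. *)
From HB Require Import structures.
From mathcomp Require Import all_boot all_order all_algebra.
From mathcomp Require Import reals.
From mathcomp Require Import ring.
Import Order.TTheory GRing.Theory Num.Theory.
Local Open Scope ring_scope.

Section InnerProduct.
Variables (R : realType) (d : nat).
Implicit Types (x y c p q : 'rV[R]_d) (N S : seq 'rV[R]_d).

Lemma dotpC x y : dotp x y = dotp y x.
Proof. by apply: eq_bigr => i _; rewrite mulrC. Qed.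

Lemma dotpBl x y c : dotp (x - y) c = dotp x c - dotp y c.
Proof. by rewrite /dotp -sumrB; apply: eq_bigr => i _; rewrite !mxE mulrBl. Qed.

Lemma dotpp_ge0 x : 0 <= dotp x x.
Proof. by apply: sumr_ge0 => i _; rewrite -expr2 sqr_ge0. Qed.

Lemma vnorm_ge0 x : 0 <= vnorm x.
Proof. exact: sqrtr_ge0. Qed.

Lemma dotp_Lagrange x y :
  \sum_(i < d) \sum_(j < d) (x 0 i * y 0 j - x 0 j * y 0 i) ^+ 2
    = 2 * (dotp x x * dotp y y - dotp x y ^+ 2).
Proof.
have sumM (F G : 'I_d -> R) :
    \sum_i \sum_j F i * G j = (\sum_i F i) * (\sum_j G j).
  by rewrite mulr_suml; apply: eq_bigr => i _; rewrite mulr_sumr.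
transitivity (\sum_(i < d) \sum_(j < d)
   ((x 0 i * x 0 i) * (y 0 j * y 0 j) + (y 0 i * y 0 i) * (x 0 j * x 0 j)
    - 2 * ((x 0 i * y 0 i) * (x 0 j * y 0 j)))).
  by apply: eq_bigr => i _; apply: eq_bigr => j _; ring.
under eq_bigr => i _ do rewrite sumrB big_split /=.
rewrite sumrB big_split /= !sumM.
under eq_bigr => i _ do rewrite -mulr_sumr.
by rewrite -mulr_sumr sumM /dotp; ring.
Qed.

Lemma dotp_sqr_le x y : dotp x y ^+ 2 <= dotp x x * dotp y y.
Proof.
have : 0 <= 2 * (dotp x x * dotp y y - dotp x y ^+ 2).
  rewrite -dotp_Lagrange; apply: sumr_ge0 => i _.
  by apply: sumr_ge0 => j _; apply: sqr_ge0.
by rewrite pmulr_rge0 // subr_ge0.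
Qed.

Lemma dotp_le_vnormM x y : dotp x y <= vnorm x * vnorm y.
Proof.
rewrite /vnorm -sqrtrM ?dotpp_ge0 // (le_trans (ler_norm _)) //.
by rewrite -sqrtr_sqr ler_sqrt ?dotp_sqr_le ?mulr_ge0 ?dotpp_ge0.
Qed.

Lemma dotp_le_centroid_radius N p q :
  p \in N -> dotp p q <= dotp q (centroid N) + radius N * vnorm q.
Proof.
move=> pN; have -> : dotp p q = dotp q (centroid N) + dotp (p - centroid N) q.
  by rewrite dotpBl (dotpC (centroid N)) addrC subrK.
rewrite lerD2l (le_trans (dotp_le_vnormM _ _)) // ler_wpM2r ?vnorm_ge0 //.
exact: (le_bigmax_seq _ _ xpredT _ pN).
Qed.

Lemma maxpair_addp p S : maxpair S <= maxpair (addp p S).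
Proof.
rewrite /addp; case: ifP => _ //; rewrite /maxpair big_cons le_max.
apply/orP; right; elim/big_ind2: _ => // [? ? ? ? ? ?|x _]; first exact: le_max2.
by rewrite big_cons; case: ifP => _ //; rewrite le_max lexx orbT.
Qed.

Lemma seqmax_le N (F : 'rV[R]_d -> R) B :
  N != [::] -> (forall p, p \in N -> F p <= B) -> seqmax N F <= B.
Proof.
case: N => // p0 N _ FB; rewrite /seqmax big_seq.
by apply: bigmax_le => //; apply: FB; rewrite mem_head.
Qed.

End InnerProduct.

Section MarginalGains.
Variables (R : realType) (d : nat) (lam mu : R) (k : nat) (q : 'rV[R]_d).
Hypotheses (k_gt1 : (1 < k)%N) (lam_le1 : lam <= 1) (mu_ge0 : 0 <= mu).
Implicit Types (p : 'rV[R]_d) (S : seq 'rV[R]_d).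

Lemma delta_avg_le p S :
  (forall p', p' \in S -> 0 <= dotp p p') ->
  delta_avg lam mu k q p S <= lam / k%:R * dotp p q.
Proof.
move=> Sge0; rewrite /delta_avg gerBl mulr_ge0 //.
  by rewrite divr_ge0 ?mulr_ge0 ?subr_ge0 ?ler1n // ltnW.
by rewrite big_seq sumr_ge0.
Qed.

Lemma delta_max_le p S : delta_max lam mu k q p S <= lam / k%:R * dotp p q.
Proof.
by rewrite /delta_max gerBl !mulr_ge0 ?subr_ge0 ?maxpair_addp.
Qed.

End MarginalGains.

Theorem theorem4 (R : realType) (d : nat) (P : seq 'rV[R]_d) (q : 'rV[R]_d)
    (k : nat) (lam mu : R) (N S : seq 'rV[R]_d) :
  uniq P -> (1 < k)%N -> 0 <= lam <= 1 -> 0 < mu ->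
  (forall x y, x \in q :: P -> y \in q :: P -> 0 <= dotp x y) ->
  uniq N -> N != [::] -> {subset N <= P} ->
  uniq S -> {subset S <= P} ->
  seqmax N (fun p => delta_avg lam mu k q p S)
    <= lam / k%:R * (dotp q (centroid N) + radius N * vnorm q)
  /\
  seqmax N (fun p => delta_max lam mu k q p S)
    <= lam / k%:R * (dotp q (centroid N) + radius N * vnorm q).
Proof.
move=> _ k_gt1 /andP [lam_ge0 lam_le1] /ltW mu_ge0 Pge0 _ N0 NP _ SP.
have gain_le p : p \in N ->
    lam / k%:R * dotp p q
      <= lam / k%:R * (dotp q (centroid N) + radius N * vnorm q).
  by move=> pN; rewrite ler_wpM2l ?divr_ge0 ?dotp_le_centroid_radius.
split; apply: seqmax_le => // p pN; apply: le_trans (gain_le p pN).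
- apply: delta_avg_le => // p' p'S.
  by apply: Pge0; apply: mem_behead; [apply: NP | apply: SP].
- exact: delta_max_le.
Qed.
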